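(* Let $s>1$ and let $M$ be the $s\times s$ integer matrix with $M_{i,i}=M_{i,i+1}=1$ and all other entries $0$. Let $n\in\mathbb N$. For every $y\in\mathbb R^s$ with $y_s=0$ there is a unique $x\in\mathbb R^s$ with $x_1=0$ and $(M^n-\mathrm{Id})x=y$. If moreover for some $k\in\{3,\dots,s\}$ one has $y_i=0$ for all $i\ge s-k+2$, then $x_j=0$ for all $j\ge s-k+3$. Finally, there is a constant $C>0$ depending only on $s$ (not on $n$) such that whenever $\kappa>0$ and $|y_i|\le\kappa/n^{i-1}$ for $1\le i\le s-1$, the solution satisfies $|x_j|\le C\kappa/n^{j-1}$ for $2\le j\le s$.
   Context: Note $M^n_{i,i}=1$ and $M^n_{i,j}=\binom{n}{j-i}$ for $i<j$, $M^n_{i,j}=0$ for $i>j$. *)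

From HB Require Import structures.
From mathcomp Require Import all_boot all_order all_algebra.
Set Implicit Arguments. Unset Strict Implicit. Unset Printing Implicit Defensive.
Import Order.TTheory GRing.Theory Num.Theory.
Local Open Scope ring_scope.

Definition Mshift (R : pzRingType) (s : nat) : 'M[R]_s :=
  \matrix_(i < s, j < s) (((i : nat) == j) || ((j : nat) == i.+1))%:R.

(* Row i of (M^n - 1) x is \sum_(j > i) C(n, j - i) x_j: the system is upper
   triangular with superdiagonal n and an empty last row.  Hence x_0 is free
   and the other coordinates are found by back substitution,
   x_(i+1) = (y_i - \sum_(j > i+1) C(n, j - i) x_j) / n, which gives uniqueness
   and the vanishing of trailing coordinates.  Since C(n, j - i) <= n^(j - i),
   a bound |x_j| <= c_j kappa / n^j on the later coordinates makes each term of
   that sum at most c_j kappa / n^i, so the weights c_j = (s+1)^(s-j) propagate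
   the bound upwards with constants independent of n.  For existence, putting
   the equation x_0 = 0 into the empty last row gives a square system whose
   matrix is injective by the same back substitution, hence invertible. *)

From HB Require Import structures.
From mathcomp Require Import all_boot all_order all_algebra.
From mathcomp Require Import zify ring.
Set Implicit Arguments.
Unset Strict Implicit.
Unset Printing Implicit Defensive.

Import Order.TTheory GRing.Theory Num.Theory.
Local Open Scope ring_scope.

Lemma bin_leq_exp n m : ('C(n, m) <= n ^ m)%N.
Proof.
rewrite (leq_trans (leq_pmulr _ (fact_gt0 m))) // bin_ffact ffact_prod.
have -> : (n ^ m = \prod_(i < m) n)%N by rewrite prod_nat_const card_ord.
by apply: leq_prod => i _; apply: leq_subr.
Qed.

Lemma ord_down_ind s (P : 'I_s -> Prop) :
  (forall j : 'I_s, (forall k : 'I_s, (j < k)%N -> P k) -> P j) -> forall j, P j.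
Proof.
move=> IH; suff P_above d (j : 'I_s) : (s - d <= j)%N -> P j.
  by move=> j; apply: (P_above s); rewrite subnn.
elim: d j => [|d IHd] j le_j; first by move: le_j; rewrite subn0 leqNgt ltn_ord.
by apply: IH => k lt_jk; apply: IHd; lia.
Qed.

Section MshiftPowers.
Variables (R : pzRingType) (s : nat).
Local Notation M := (Mshift R s).

Lemma Mshift_expE n (i j : 'I_s) :
  (M ^+ n) i j = if (i <= j)%N then 'C(n, j - i)%:R else 0.
Proof.
elim: n j => [|n IHn] j.
  rewrite expr0 mxE -val_eqE /=; case: ltngtP => [lt_ij|lt_ji|->].
  - by rewrite bin0n subn_eq0 leqNgt lt_ij.
  - by [].
  - by rewrite subnn.
rewrite exprSr -mulmxE mxE (bigD1 j) //= IHn mxE eqxx /= mulr1.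
case: j => [[|j] lt_j_s] /=.
  rewrite big1 ?addr0 ?sub0n ?bin0 // => k; rewrite -val_eqE /= => /negPf ne_kj.
  by rewrite mxE ne_kj mulr0.
rewrite (bigD1 (Ordinal (ltnW lt_j_s))) -?val_eqE /= ?ltn_eqF //.
rewrite IHn mxE eqxx orbT mulr1 big1 ?addr0 => [|k /andP[ne_kj ne_kj']]; last first.
  rewrite mxE -!val_eqE /= in ne_kj ne_kj' *.
  by rewrite (negPf ne_kj) /= eqSS eq_sym (negPf ne_kj') mulr0.
case: (ltngtP i j.+1) => [lt_ij|lt_ji|->].
- by rewrite -ltnS lt_ij -natrD subSn // binS.
- by rewrite leqNgt (ltnW lt_ji) addr0.
- by rewrite ltnn addr0 subnn !bin0.
Qed.

Lemma Mshift_exp_sub1_mulE n (x : 'cV[R]_s) (i : 'I_s) :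
  ((M ^+ n - 1) *m x) i 0 = \sum_(j < s | (i < j)%N) 'C(n, j - i)%:R * x j 0.
Proof.
rewrite mxE [RHS]big_mkcond /=; apply: eq_bigr => j _.
rewrite !mxE Mshift_expE -val_eqE /=.
case: ltngtP => [lt_ij|lt_ji|->].
- by rewrite subr0.
- by rewrite subr0 mul0r.
- by rewrite subnn bin0 subrr mul0r.
Qed.

Lemma Mshift_exp_sub1_mulS n (x : 'cV[R]_s) (i j : 'I_s) : i.+1 = j ->
  ((M ^+ n - 1) *m x) i 0 =
  n%:R * x j 0 + \sum_(k < s | (j < k)%N) 'C(n, k - i)%:R * x k 0.
Proof.
move=> ij; rewrite Mshift_exp_sub1_mulE (bigD1 j) -ij //= subSnn bin1.
congr (_ + _); apply: eq_bigl => k.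
by rewrite -val_eqE /= -ij [(i.+1 < k)%N]ltn_neqAle andbC eq_sym.
Qed.

Lemma Mshift_exp_sub1_mul_last n (x : 'cV[R]_s) (i : 'I_s) : i.+1 = s ->
  ((M ^+ n - 1) *m x) i 0 = 0.
Proof.
move=> i_last; rewrite Mshift_exp_sub1_mulE big_pred0 // => j.
by apply/negbTE; rewrite -leqNgt -ltnS i_last.
Qed.

End MshiftPowers.

Lemma unitmx_col_inj (F : fieldType) n (B : 'M[F]_n) :
  (forall x : 'cV_n, B *m x = 0 -> x = 0) -> B \in unitmx.
Proof.
move=> B_inj; rewrite unitmxE unitfE -det_tr; apply/negP => /det0P[v nz_v vB0].
move/eqP: nz_v; apply; apply: trmx_inj; rewrite trmx0.
by apply: B_inj; rewrite -[B]trmxK -trmx_mul vB0 trmx0.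
Qed.

Section MshiftEquation.
Variable R : numFieldType.
Local Notation A s n := (Mshift R s ^+ n - 1).

Lemma Mshift_exp_sub1_trailing_zero s n m (x : 'cV[R]_s) : (0 < n)%N ->
  (forall i : 'I_s, (m <= i)%N -> (A s n *m x) i 0 = 0) ->
  forall j : 'I_s, (m < j)%N -> x j 0 = 0.
Proof.
move=> n_gt0 Ax0; apply: ord_down_ind => -[[|j] lt_j_s] IH //= lt_mj.
have := Mshift_exp_sub1_mulS n x (i := Ordinal (ltnW lt_j_s)) (j := Ordinal lt_j_s) erefl.
rewrite Ax0 //= big1 ?addr0 => [/esym/eqP|k lt_jk]; last first.
  by rewrite IH ?mulr0 // (ltn_trans lt_mj).
by rewrite mulf_eq0 pnatr_eq0 eqn0Ngt n_gt0 => /eqP.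
Qed.

Lemma Mshift_exp_sub1_kernel s n (x : 'cV[R]_s.+1) : (0 < n)%N ->
  x ord0 0 = 0 -> A s.+1 n *m x = 0 -> x = 0.
Proof.
move=> n_gt0 x0 Ax0; apply/matrixP => -[[|j] lt_j] k; rewrite ord1 mxE.
  by rewrite -x0; congr (x _ 0); apply: val_inj.
by apply: (Mshift_exp_sub1_trailing_zero (m := 0) n_gt0) => // i _; rewrite Ax0 mxE.
Qed.

Lemma Mshift_exp_sub1_solvable s n (y : 'cV[R]_s.+1) : (0 < n)%N ->
  y ord_max 0 = 0 -> exists2 x : 'cV[R]_s.+1, x ord0 0 = 0 & A s.+1 n *m x = y.
Proof.
move=> n_gt0 y_last.
pose B := A s.+1 n + delta_mx ord_max ord0.
have B_mul (x : 'cV[R]_s.+1) :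
    B *m x = A s.+1 n *m x + x ord0 0 *: delta_mx ord_max 0.
  rewrite mulmxDl -(mul_delta_mx (0 : 'I_1) ord_max ord0) -mulmxA -rowE.
  by rewrite (mx11_scalar (row ord0 x)) mxE mul_mx_scalar.
have B_last (x : 'cV[R]_s.+1) : (B *m x) ord_max 0 = x ord0 0.
  by rewrite B_mul mxE Mshift_exp_sub1_mul_last // !mxE !eqxx mulr1 add0r.
have B_sol (x z : 'cV[R]_s.+1) :
    z ord_max 0 = 0 -> B *m x = z -> x ord0 0 = 0 /\ A s.+1 n *m x = z.
  move=> z_last Bx; have x0 : x ord0 0 = 0 by rewrite -B_last Bx.
  by split=> //; rewrite -Bx B_mul x0 scale0r addr0.
have B_unit : B \in unitmx.
  apply: unitmx_col_inj => x Bx0; have [|x0 Ax0] := B_sol x 0 _ Bx0; first by rewrite mxE.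
  exact: Mshift_exp_sub1_kernel x0 Ax0.
by have [] := B_sol _ _ y_last (mulKVmx B_unit y); exists (invmx B *m y).
Qed.

Lemma Mshift_exp_sub1_sol_bound s n (kappa : R) (x : 'cV[R]_s) :
  (0 < n)%N -> 0 <= kappa ->
  (forall i : 'I_s, (i.+1 < s)%N -> `|(A s n *m x) i 0| <= kappa / n%:R ^+ i) ->
  forall j : 'I_s, (0 < j)%N ->
    `|x j 0| <= (s.+1 ^ (s - j))%:R * kappa / n%:R ^+ j.
Proof.
move=> n_gt0 kappa_ge0 y_bound; apply: ord_down_ind => -[[|j] lt_j_s] IH //= _.
set i := Ordinal (ltnW lt_j_s).
have := Mshift_exp_sub1_mulS n x (i := i) (j := Ordinal lt_j_s) erefl.
set S := \sum_(k < s | _) _; set N : R := n%:R => row_eq.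
have N_gt0 : 0 < N by rewrite ltr0n.
have Nj_gt0 : 0 < N ^+ j by rewrite exprn_gt0.
pose c := (s.+1 ^ (s - j.+2))%:R * kappa / N ^+ j.
have S_bound : `|S| <= c *+ s.
  rewrite -[s in c *+ s]card_ord -sumr_const.
  apply: le_trans (ler_norm_sum _ _ _) _; rewrite big_mkcond /=.
  apply: ler_sum => k _; case: ifP => [lt_jk|_]; last first.
    by rewrite /c divr_ge0 ?mulr_ge0 // ltW.
  have le_jk : (j <= k)%N by apply: ltnW; apply: ltnW.
  rewrite normrM ger0_norm ?ler0n //.
  apply: le_trans (_ : N ^+ (k - j) * ((s.+1 ^ (s - k))%:R * kappa / N ^+ k) <= _).
    apply: ler_pM => //; first by rewrite -natrX ler_nat bin_leq_exp.
    by rewrite IH // (leq_ltn_trans _ lt_jk).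
  have -> : N ^+ (k - j) * ((s.+1 ^ (s - k))%:R * kappa / N ^+ k)
            = (s.+1 ^ (s - k))%:R * kappa / N ^+ j.
    rewrite -[in N ^+ k](subnK le_jk) exprD; field.
    by rewrite !expf_neq0 ?gt_eqF.
  rewrite /c ler_pM2r ?invr_gt0 //; apply: ler_wpM2r => //.
  by rewrite ler_nat leq_pexp2l ?leq_sub2l.
have x_eq : x (Ordinal lt_j_s) 0 = ((A s n *m x) i 0 - S) / N.
  by rewrite row_eq; field; rewrite gt_eqF.
rewrite x_eq normrM normfV (gtr0_norm N_gt0).
apply: le_trans (_ : (kappa / N ^+ j + c *+ s) / N <= _).
  rewrite ler_pM2r ?invr_gt0 //; apply: le_trans (ler_normB _ _) _.
  exact: lerD (y_bound i lt_j_s) S_bound.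
have -> : (kappa / N ^+ j + c *+ s) / N
          = (1 + s * s.+1 ^ (s - j.+2))%:R * kappa / N ^+ j.+1.
  by rewrite /c -mulr_natr natrD natrM natrX exprSr; field; rewrite !gt_eqF.
rewrite ler_pM2r ?invr_gt0 ?exprn_gt0 //; apply: ler_wpM2r => //.
by rewrite ler_nat -(subnSK lt_j_s) expnS mulSn leq_add2r expn_gt0.
Qed.
End MshiftEquation.

Theorem mainTheorem13 (R : realFieldType) (s : nat) (hs : (1 < s)%N) :
  (* existence and uniqueness *)
  (forall (n : nat), (0 < n)%N ->
    forall y : 'cV[R]_s, (forall i : 'I_s, i.+1 = s -> y i 0 = 0) ->
    exists x : 'cV[R]_s,
      ((forall j : 'I_s, j.+1 = 1%N -> x j 0 = 0) /\
       (Mshift R s ^+ n - 1) *m x = y) /\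
      (forall x' : 'cV[R]_s,
         (forall j : 'I_s, j.+1 = 1%N -> x' j 0 = 0) /\
         (Mshift R s ^+ n - 1) *m x' = y -> x' = x))
  /\
  (* vanishing of trailing coordinates *)
  (forall (n : nat), (0 < n)%N ->
    forall (k : nat), (3 <= k <= s)%N ->
    forall y x : 'cV[R]_s,
      (forall i : 'I_s, i.+1 = s -> y i 0 = 0) ->
      (forall i : 'I_s, (s - k + 2 <= i.+1)%N -> y i 0 = 0) ->
      (forall j : 'I_s, j.+1 = 1%N -> x j 0 = 0) ->
      (Mshift R s ^+ n - 1) *m x = y ->
      forall j : 'I_s, (s - k + 3 <= j.+1)%N -> x j 0 = 0)
  /\
  (* uniform bounds, C depending only on s *)
  (exists C : R, 0 < C /\
    forall (n : nat), (0 < n)%N ->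
    forall (kappa : R), 0 < kappa ->
    forall y x : 'cV[R]_s,
      (forall i : 'I_s, i.+1 = s -> y i 0 = 0) ->
      (forall i : 'I_s, (1 <= i.+1 <= s - 1)%N ->
         `|y i 0| <= kappa / (n%:R ^+ (i.+1 - 1))) ->
      (forall j : 'I_s, j.+1 = 1%N -> x j 0 = 0) ->
      (Mshift R s ^+ n - 1) *m x = y ->
      forall j : 'I_s, (2 <= j.+1 <= s)%N ->
        `|x j 0| <= C * kappa / (n%:R ^+ (j.+1 - 1))).
Proof.
case: s hs => [|s] // _.
have first_ord0 (j : 'I_s.+1) : j.+1 = 1%N -> j = ord0 by case=> j0; apply: val_inj.
split; [|split].
- move=> n n_gt0 y y_last.
  have [x x0 Ax] := Mshift_exp_sub1_solvable n_gt0 (y_last ord_max erefl).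
  exists x; split=> [|x' [x'0 Ax']]; first by split=> // j /first_ord0 ->.
  apply/subr0_eq/(Mshift_exp_sub1_kernel n_gt0).
    by rewrite !mxE x'0 ?x0 ?subr0.
  by rewrite mulmxBr Ax Ax' subrr.
- move=> n n_gt0 k _ y x _ y_zero _ Ax j le_j.
  apply: (Mshift_exp_sub1_trailing_zero (m := s.+1 - k + 1) n_gt0); last by lia.
  by move=> i le_i; rewrite Ax y_zero //; lia.
- exists (s.+2 ^ s.+1)%:R; split; first by rewrite ltr0n expn_gt0.
  move=> n n_gt0 kappa kappa_gt0 y x _ y_bound _ Ax j j_bounds.
  have y_bound' (i : 'I_s.+1) : (i.+1 < s.+1)%N ->
      `|((Mshift R s.+1 ^+ n - 1) *m x) i 0| <= kappa / n%:R ^+ i.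
    by move=> lt_i; rewrite Ax; have := y_bound i; rewrite !subn1; apply.
  have j_gt0 : (0 < j)%N by lia.
  apply: le_trans (Mshift_exp_sub1_sol_bound n_gt0 (ltW kappa_gt0) y_bound' j_gt0) _.
  rewrite subn1 ler_pM2r ?invr_gt0 ?exprn_gt0 ?ltr0n // ler_pM2r //.
  by rewrite ler_nat leq_pexp2l ?leq_subr.
Qed.
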